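(* Let $G$ be a finite simple graph with $n$ vertices $v_1,\dots,v_n$, let $\bar{\bar{d}}=\sqrt{\frac{d(v_1)^2+\cdots+d(v_n)^2}{n}}$, and let $\omega(G)$ be the clique number of $G$. Suppose $$\omega(G)=\frac{n}{n-\bar{\bar{d}}}.$$ Then $G$ is a regular complete $\omega(G)$-partite graph (i.e. a complete $\omega(G)$-chromatic graph which is regular, so its $\omega(G)$ parts all have size $n/\omega(G)$).
   Context: All graphs are finite, undirected, without loops or multiple edges; $d(v)$ denotes the degree of vertex $v$. *)

From HB Require Import structures.
From mathcomp Require Import all_boot all_order all_algebra.
From mathcomp Require Import reals.
Set Implicit Arguments. Unset Strict Implicit. Unset Printing Implicit Defensive.
Import Order.TTheory GRing.Theory Num.Theory.

Definition simple_graph (T : finType) (e : rel T) : Prop :=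
  symmetric e /\ irreflexive e.

Definition deg (T : finType) (e : rel T) (v : T) : nat := #|[set w | e v w]|.

Definition is_clique (T : finType) (e : rel T) (A : {set T}) : bool :=
  [forall x in A, forall y in A, (x != y) ==> e x y].

Definition clique_number (T : finType) (e : rel T) : nat :=
  \max_(A : {set T} | is_clique e A) #|A|.

Definition complete_multipartite (T : finType) (e : rel T) (k : nat) : Prop :=
  exists f : T -> 'I_k,
    (forall i : 'I_k, exists x : T, f x = i) /\
    (forall x y : T, e x y = (f x != f y)).

Definition regular_graph (T : finType) (e : rel T) : Prop :=
  forall v w : T, deg e v = deg e w.

Definition quad_mean_deg (R : realType) (T : finType) (e : rel T) : R :=
  Num.sqrt ((\sum_(v : T) ((deg e v)%:R ^+ 2)) / (#|T|%:R)).

(* Write k for the clique number, n for the order and q for the quadratic mean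
   of the degrees, so that the hypothesis reads k q = (k - 1) n.  The
   Motzkin-Straus inequality x^T A x <= (1 - 1/k) (sum x)^2 (x >= 0), together
   with Cauchy-Schwarz, gives Wilf's bound |w^T A w| <= (1 - 1/k) n |w|^2.
   Evaluated at q 1 + d and q 1 - d, whose forms differ by 4 q |d|^2 = 4 q n q^2,
   the bound is forced to be an equality at q 1 + d, hence so is Cauchy-Schwarz
   and the degree vector d is constant.  A k-clique-bounded graph all of whose
   degrees equal (1 - 1/k) n is extremal for Turan's theorem: splitting off the
   neighbourhood of a vertex, an induction on k shows that non-adjacency is
   transitive, and the parts are cut out by a maximum clique. *)

From HB Require Import structures.
From mathcomp Require Import all_boot all_order all_algebra.
From mathcomp Require Import reals.
From mathcomp Require Import ring lra zify.
Import Order.TTheory GRing.Theory Num.Theory.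
Set Implicit Arguments. Unset Strict Implicit. Unset Printing Implicit Defensive.

Section Cliques.
Variables (T : finType) (e : rel T).

Lemma is_clique_set1 x : is_clique e [set x].
Proof.
apply/forall_inP => a /set1P->; apply/forall_inP => b /set1P->.
by rewrite eqxx.
Qed.

Lemma is_clique_setU1 (A : {set T}) v : symmetric e -> is_clique e A ->
  (forall w, w \in A -> e v w) -> is_clique e (v |: A).
Proof.
move=> sym_e /forall_inP cliA adjv.
apply/forall_inP => x /setU1P[->|xA]; apply/forall_inP => y /setU1P[->|yA];
  apply/implyP => xy.
- by rewrite eqxx in xy.
- exact: adjv.
- by rewrite sym_e adjv.
- by move/forall_inP/(_ y yA)/implyP: (cliA x xA); apply.
Qed.

Lemma card_le_clique_number (A : {set T}) : is_clique e A -> #|A| <= clique_number e.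
Proof. exact: (@leq_bigmax_cond _ (is_clique e) (fun A => #|A|)). Qed.

Lemma exists_max_clique :
  exists2 C : {set T}, is_clique e C & #|C| = clique_number e.
Proof.
have [|C cliC maxC] := eq_bigmax_cond (fun A : {set T} => #|A|) (A := is_clique e).
  by apply/card_gt0P; exists set0; apply/forall_inP => x; rewrite inE.
by exists C; last exact: esym maxC.
Qed.

Lemma clique_number_gt0 (x : T) : 0 < clique_number e.
Proof. by have := card_le_clique_number (is_clique_set1 x); rewrite cards1. Qed.

End Cliques.

Section Turan.
Variables (T : finType) (e : rel T).
Hypotheses (sym_e : symmetric e) (irr_e : irreflexive e).

Definition deg_in (S : {set T}) v := #|[set w in S | e v w]|.

Definition clique_bounded k (S : {set T}) :=
  forall A : {set T}, A \subset S -> is_clique e A -> #|A| <= k.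

(* Turan's degree condition [deg_in S v >= (1 - 1/(j+1)) #|S|], without division *)
Definition turan_dense j (S : {set T}) :=
  forall v, v \in S -> #|S| * j <= deg_in S v * j.+1.

Definition nonadj_transitive (S : {set T}) :=
  forall x y z, x \in S -> y \in S -> z \in S -> ~~ e x y -> ~~ e y z -> ~~ e x z.

Definition has_clique k (S : {set T}) :=
  exists A : {set T}, [/\ A \subset S, is_clique e A & #|A| = k].

Lemma deg_in_setT v : deg_in [set: T] v = deg e v.
Proof. by apply: eq_card => w; rewrite !inE. Qed.

Lemma deg_in_le (S : {set T}) v : deg_in S v <= #|S|.
Proof. by apply/subset_leq_card/subsetP => w; rewrite inE => /andP[]. Qed.

Lemma deg_inD (S N : {set T}) v :
  N \subset S -> deg_in S v = deg_in N v + deg_in (S :\: N) v.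
Proof.
move=> NS; rewrite /deg_in -(cardsID N [set w in S | e v w]).
by congr (_ + _); apply: eq_card => w; rewrite !inE; have := subsetP NS w;
  case: (w \in N); case: (w \in S); case: (e v w) => // /(_ isT).
Qed.

Lemma turan_extremal0 (S : {set T}) : clique_bounded 1 S ->
  [/\ forall v, v \in S -> deg_in S v * 1 = #|S| * 0, nonadj_transitive S
    & S != set0 -> has_clique 1 S].
Proof.
move=> bS; have noedge x y : x \in S -> y \in S -> ~~ e x y.
  move=> xS yS; apply/negP => exy; have xy : x != y by apply: contraTneq exy => ->; rewrite irr_e.
  have cli : is_clique e [set x; y].
    by apply: is_clique_setU1 (is_clique_set1 _ _) _ => // w /set1P->.
  by have := bS _ _ cli; rewrite cards2 xy subUset !sub1set xS yS => /(_ isT).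
split=> [v vS|x y z xS _ zS _ _|/set0Pn[v vS]]; last 2 first.
- exact: noedge.
- by exists [set v]; rewrite sub1set vS cards1 is_clique_set1.
rewrite muln1 muln0; apply/eqP; rewrite cards_eq0; apply/eqP/setP => w; rewrite !inE.
by apply/negbTE/andP => -[wS]; apply/negP; apply: noedge.
Qed.

Section TuranStep.
Variables (j : nat) (S : {set T}) (v0 : T).
Hypotheses (v0S : v0 \in S) (boundS : clique_bounded j.+2 S)
  (denseS : turan_dense j.+1 S).

Local Notation N := [set w in S | e v0 w].
Local Notation Nc := (S :\: N).

Let subN : N \subset S.
Proof. by apply/subsetP => w; rewrite inE => /andP[]. Qed.

Let cardSN : #|S| = #|N| + #|Nc|.
Proof. by rewrite -(cardsID N S) (setIidPr subN). Qed.

Let v0Nc : v0 \in Nc.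
Proof. by rewrite !inE v0S irr_e. Qed.

Lemma card_nonnbr_le : #|Nc| * j.+1 <= #|N|.
Proof. by have := denseS v0S; rewrite /deg_in cardSN; nia. Qed.

Lemma nbr_nonempty : N != set0.
Proof.
apply/set0Pn/card_gt0P; have := card_nonnbr_le.
have : 0 < #|Nc| by apply/card_gt0P; exists v0.
nia.
Qed.

Lemma nbr_clique_bounded : clique_bounded j.+1 N.
Proof.
move=> A AN cliA; have v0A : v0 \notin A.
  by apply: contraTN v0Nc => /(subsetP AN) v0N; rewrite inE v0N.
have := @boundS (v0 |: A); rewrite subUset sub1set v0S (subset_trans AN subN) cardsU1 v0A.
by apply=> //; apply: is_clique_setU1 => // w /(subsetP AN); rewrite inE => /andP[].
Qed.

Lemma nbr_dense : turan_dense j N.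
Proof.
move=> u uN; have uS := subsetP subN u uN.
have := denseS uS; rewrite (deg_inD u subN) cardSN.
have := deg_in_le Nc u; set d := deg_in N u => cle dense.
have {cle dense} /(leq_mul (leqnn j.+1)) : #|N| * j.+1 <= d * j.+2 + #|Nc| by nia.
rewrite -(leq_pmul2l (ltn0Sn j.+1)); have := card_nonnbr_le; nia.
Qed.

(* the induction hypothesis, for the neighbourhood [N] of [v0] in [S] *)
Hypotheses (degN : forall u, u \in N -> deg_in N u * j.+1 = #|N| * j)
  (cliqueN : has_clique j.+1 N).

Lemma deg_nonnbr_full u : u \in N -> deg_in Nc u = #|Nc|.
Proof.
move=> uN; have uS := subsetP subN u uN.
have := denseS uS; have := degN uN; have := card_nonnbr_le.
rewrite (deg_inD u subN) cardSN; have := deg_in_le Nc u; nia.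
Qed.

Lemma card_nbr : #|N| = #|Nc| * j.+1.
Proof.
have [u0 u0N] := set0Pn _ nbr_nonempty; have u0S := subsetP subN u0 u0N.
have := denseS u0S; have := degN u0N; have := card_nonnbr_le.
rewrite (deg_inD u0 subN) cardSN (deg_nonnbr_full u0N); nia.
Qed.

Lemma nbr_adj_nonnbr u w : u \in N -> w \in Nc -> e u w.
Proof.
move=> uN wNc; have sub : [set w in Nc | e u w] \subset Nc.
  by apply/subsetP => x /setIdP[].
move/(subset_cardP (deg_nonnbr_full uN))/(_ w): sub.
by rewrite wNc => /idP/setIdP[].
Qed.

Lemma nonnbr_indep w w' : w \in Nc -> w' \in Nc -> ~~ e w w'.
Proof.
move=> wNc w'Nc; have [[wS wN] [w'S w'N]] := (setDP wNc, setDP w'Nc).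
apply/negP => eww'.
have [A [AN cliA cardA]] := cliqueN.
have notA x : x \notin N -> x \notin A by apply: contra => /(subsetP AN).
have ww' : w != w' by apply: contraTneq eww' => ->; rewrite irr_e.
have adjA x : x \in Nc -> forall a, a \in A -> e x a.
  by move=> xNc a /(subsetP AN) aN; rewrite sym_e nbr_adj_nonnbr.
have cli : is_clique e (w |: (w' |: A)).
  apply: is_clique_setU1 => //; first exact: is_clique_setU1 cliA (adjA _ w'Nc).
  by move=> a /setU1P[->//|]; apply: adjA.
have := @boundS _ _ cli; rewrite !subUset !sub1set wS w'S (subset_trans AN subN).
by rewrite !cardsU1 !inE negb_or ww' !notA // cardA ltnn => /(_ isT).
Qed.

Lemma turan_step_deg v : v \in S -> deg_in S v * j.+2 = #|S| * j.+1.
Proof.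
move=> vS; rewrite (deg_inD v subN) cardSN card_nbr.
case: (boolP (v \in N)) => vN.
  by have := degN vN; rewrite deg_nonnbr_full // card_nbr; nia.
have vNc : v \in Nc by apply/setDP.
have -> : deg_in N v = #|N|.
  apply: eq_card => w; apply/setIdP/idP => [[]//|wN].
  by rewrite sym_e nbr_adj_nonnbr.
have -> : deg_in Nc v = 0.
  by apply: eq_card0 => w; apply/negbTE/setIdP => -[wNc]; apply/negP/nonnbr_indep.
by rewrite card_nbr; nia.
Qed.

Lemma nonadj_same_side x y :
  x \in S -> y \in S -> ~~ e x y -> (x \in N) = (y \in N).
Proof.
move=> xS yS; case: (boolP (x \in N)) => xN; case: (boolP (y \in N)) => yN //.
- by rewrite nbr_adj_nonnbr //; apply/setDP.
- by rewrite sym_e nbr_adj_nonnbr //; apply/setDP.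
Qed.

Hypothesis transN : nonadj_transitive N.

Lemma turan_step_transitive : nonadj_transitive S.
Proof.
move=> x y z xS yS zS nxy nyz.
have xy := nonadj_same_side xS yS nxy; have yz := nonadj_same_side yS zS nyz.
case: (boolP (y \in N)) => yN; first by apply: transN nxy nyz; rewrite ?xy -?yz.
by apply: nonnbr_indep; apply/setDP; rewrite ?xy -?yz.
Qed.

Lemma turan_step_clique : has_clique j.+2 S.
Proof.
have [A [AN cliA cardA]] := cliqueN.
have v0A : v0 \notin A.
  by apply: contraTN v0Nc => /(subsetP AN) v0N; rewrite inE v0N.
exists (v0 |: A); rewrite subUset sub1set v0S (subset_trans AN subN) cardsU1 v0A cardA.
by split=> //; apply: is_clique_setU1 => // w /(subsetP AN) /setIdP[].
Qed.

End TuranStep.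

Theorem turan_extremal j (S : {set T}) : clique_bounded j.+1 S -> turan_dense j S ->
  [/\ forall v, v \in S -> deg_in S v * j.+1 = #|S| * j, nonadj_transitive S
    & S != set0 -> has_clique j.+1 S].
Proof.
elim: j S => [|j IH] S bS dS; first exact: turan_extremal0.
have [->|/set0Pn[v0 v0S]] := eqVneq S set0; first by split=> // x; rewrite inE.
have [degN transN cliqueN] := IH _ (nbr_clique_bounded v0S bS) (nbr_dense v0S dS).
have cliN := cliqueN (nbr_nonempty v0S dS).
split=> [v||_].
- exact: turan_step_deg v0S bS dS degN cliN v.
- exact: turan_step_transitive v0S bS dS degN cliN transN.
- exact: turan_step_clique v0S cliN.
Qed.

End Turan.

Section Multipartite.
Variables (T : finType) (e : rel T).
Hypotheses (sym_e : symmetric e) (irr_e : irreflexive e).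
Hypothesis nonadj_trans : nonadj_transitive e [set: T].

Let trans x y z : ~~ e x y -> ~~ e y z -> ~~ e x z.
Proof. exact: nonadj_trans. Qed.

Variable C : {set T}.
Hypotheses (cliC : is_clique e C) (cardC : #|C| = clique_number e).

Lemma max_clique_nonadj x : exists2 c, c \in C & ~~ e x c.
Proof.
apply/exists_inP; apply: contraT; rewrite negb_exists_in => /forall_inP adjx.
have xC : x \notin C by apply/negP => /[dup] /adjx; rewrite irr_e.
have /card_le_clique_number : is_clique e (x |: C).
  by apply: is_clique_setU1 => // w /adjx; rewrite negbK.
by rewrite cardsU1 xC cardC ltnn.
Qed.

Lemma max_clique_nonadj_uniq x c c' :
  c \in C -> c' \in C -> ~~ e x c -> ~~ e x c' -> c = c'.
Proof.
move=> cC c'C nxc nxc'; apply/eqP; apply: contraT => cc'.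
move/forall_inP/(_ c cC)/forall_inP/(_ c' c'C)/implyP/(_ cc'): cliC => ecc'.
by have := trans (x := c) (y := x) (z := c'); rewrite sym_e nxc nxc' ecc' => /(_ isT isT).
Qed.

(* the part of [x] is indexed by its unique non-neighbour on the maximum clique [C] *)
Let g x := odflt x [pick c in C | ~~ e x c].

Let gP x : g x \in C /\ ~~ e x (g x).
Proof.
rewrite /g; case: pickP => [c /andP[]//|none].
by have [c cC nxc] := max_clique_nonadj x; have := none c; rewrite cC nxc.
Qed.

Let gC x : g x \in C. Proof. by case: (gP x). Qed.

Let g_nonadj x : ~~ e x (g x). Proof. by case: (gP x). Qed.

Let g_id c : c \in C -> g c = c.
Proof. by move=> cC; apply: max_clique_nonadj_uniq (gC c) cC (g_nonadj c) _; rewrite irr_e. Qed.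

Lemma complete_multipartite_max_clique : complete_multipartite e (clique_number e).
Proof.
have index_lt x : index (g x) (enum C) < clique_number e.
  by rewrite -cardC cardE index_mem mem_enum.
exists (fun x => Ordinal (index_lt x)); split=> [i|x y].
  have [c0 c0C] : exists c0, c0 \in C.
    by apply/card_gt0P; rewrite cardC (leq_ltn_trans _ (ltn_ord i)).
  have i_lt : i < size (enum C) by rewrite -cardE cardC.
  exists (nth c0 (enum C) i); apply: val_inj => /=.
  by rewrite g_id ?index_uniq ?enum_uniq // -mem_enum mem_nth.
rewrite -val_eqE /= (inj_in_eq (@index_inj _ x (enum C))) ?mem_enum //.
case: (boolP (e x y)) => exy; apply: esym.
  apply/negP => /eqP gxy.
  by have := @trans x (g x) y (g_nonadj x); rewrite gxy sym_e g_nonadj exy => /(_ isT).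
apply/negbF/eqP; apply: max_clique_nonadj_uniq (g_nonadj x) _ => //.
exact: trans exy (g_nonadj y).
Qed.

End Multipartite.

Lemma complete_multipartite_of_nonadj_transitive (T : finType) (e : rel T) :
  symmetric e -> irreflexive e -> nonadj_transitive e [set: T] ->
  complete_multipartite e (clique_number e).
Proof.
move=> sym_e irr_e trans; have [C cliC cardC] := exists_max_clique e.
exact: complete_multipartite_max_clique cliC cardC.
Qed.

Lemma nonadj_transitive_of_regular (T : finType) (e : rel T) :
  symmetric e -> irreflexive e ->
  (forall v, deg e v * clique_number e = #|T| * (clique_number e).-1) ->
  nonadj_transitive e [set: T].
Proof.
move=> sym_e irr_e degk x y z xT; have k_gt0 := clique_number_gt0 e x.
have bounded : clique_bounded e (clique_number e).-1.+1 [set: T].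
  by move=> A _; rewrite prednK //; apply: card_le_clique_number.
have dense : turan_dense e (clique_number e).-1 [set: T].
  by move=> v _; rewrite deg_in_setT cardsT prednK // degk.
by have [_ trans _] := turan_extremal sym_e irr_e bounded dense; apply: trans.
Qed.

Local Open Scope ring_scope.

Section CauchySchwarz.
Variables (R : realFieldType) (T : finType).

Lemma sum_sqr_diff (A : {pred T}) (f : T -> R) :
  \sum_(u in A) \sum_(v in A) (f u - f v) ^+ 2 =
  2 * (#|A|%:R * \sum_(u in A) f u ^+ 2 - (\sum_(u in A) f u) ^+ 2).
Proof.
have row u : \sum_(v in A) (f u - f v) ^+ 2 =
    #|A|%:R * f u ^+ 2 - 2 * f u * (\sum_(v in A) f v) + \sum_(v in A) f v ^+ 2.
  rewrite (eq_bigr (fun v => (f u ^+ 2 - 2 * f u * f v) + f v ^+ 2)) => [|v _]; last by ring.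
  by rewrite big_split /= sumrB sumr_const -mulr_sumr [#|A|%:R * _]mulr_natl.
rewrite (eq_bigr _ (fun u _ => row u)) big_split /= sumrB sumr_const -!mulr_sumr.
rewrite -!mulr_suml -mulr_sumr -[_ *+ #|A|]mulr_natl; ring.
Qed.

Lemma sqr_sum_le (A : {pred T}) (f : T -> R) :
  (\sum_(u in A) f u) ^+ 2 <= #|A|%:R * \sum_(u in A) f u ^+ 2.
Proof.
have : 0 <= \sum_(u in A) \sum_(v in A) (f u - f v) ^+ 2.
  by apply: sumr_ge0 => u _; apply: sumr_ge0 => v _; apply: sqr_ge0.
rewrite sum_sqr_diff; lra.
Qed.

Lemma sqr_sum_eq_const (f : T -> R) :
  (\sum_u f u) ^+ 2 = #|T|%:R * \sum_u f u ^+ 2 -> forall u v, f u = f v.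
Proof.
move=> eq_sum u v; have := sum_sqr_diff T f; rewrite eq_sum subrr mulr0.
have row_ge0 i : i \in T -> 0 <= \sum_(w in T) (f i - f w) ^+ 2.
  by move=> _; apply: sumr_ge0 => w _; apply: sqr_ge0.
move/(psumr_eq0P row_ge0)/(_ u isT).
move/(psumr_eq0P (fun _ _ => sqr_ge0 _))/(_ v isT).
by move/eqP; rewrite sqrf_eq0 subr_eq0 => /eqP.
Qed.

End CauchySchwarz.

Section EdgeForm.
Variables (R : realFieldType) (T : finType) (e : rel T).
Hypotheses (sym_e : symmetric e) (irr_e : irreflexive e).

Local Notation K := ((clique_number e)%:R : R).

Definition edge_form (x y : T -> R) := \sum_u \sum_v (e u v)%:R * x u * y v.

Definition nbr_sum w (y : T -> R) := \sum_v (e w v)%:R * y v.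

Definition supp (x : T -> R) := [set u | x u != 0].

Lemma sum_delta a (F : T -> R) : \sum_u (u == a)%:R * F u = F a.
Proof. by rewrite (bigD1 a) //= eqxx mul1r big1 ?addr0 // => u /negbTE->; rewrite mul0r. Qed.

Lemma edge_formC x y : edge_form x y = edge_form y x.
Proof.
rewrite /edge_form exchange_big; apply: eq_bigr => u _; apply: eq_bigr => v _.
by rewrite sym_e; ring.
Qed.

Lemma edge_form_combl a b x y z :
  edge_form (fun u => a * x u + b * y u) z = a * edge_form x z + b * edge_form y z.
Proof.
rewrite /edge_form !mulr_sumr -big_split; apply: eq_bigr => u _ /=.
by rewrite !mulr_sumr -big_split; apply: eq_bigr => v _ /=; ring.
Qed.

Lemma edge_form_comb a b x y :
  edge_form (fun u => a * x u + b * y u) (fun u => a * x u + b * y u) =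
  a ^+ 2 * edge_form x x + 2 * a * b * edge_form x y + b ^+ 2 * edge_form y y.
Proof.
by rewrite edge_form_combl (edge_formC x) (edge_formC y) !edge_form_combl (edge_formC y x); ring.
Qed.

Lemma edge_formE x z : edge_form x z = \sum_u x u * nbr_sum u z.
Proof. by apply: eq_bigr => u _; rewrite /nbr_sum mulr_sumr; apply: eq_bigr => v _; ring. Qed.

Lemma nbr_sum1 w : nbr_sum w (fun _ => 1) = (deg e w)%:R.
Proof.
rewrite /nbr_sum /deg -sum1_card natr_sum [RHS]big_mkcond /=; apply: eq_bigr => v _.
by rewrite inE; case: (e w v); rewrite ?mulr1.
Qed.

Lemma edge_form1 y : edge_form (fun _ => 1) y = \sum_u (deg e u)%:R * y u.
Proof. by rewrite edge_formC edge_formE; apply: eq_bigr => u _; rewrite nbr_sum1 mulrC. Qed.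

Lemma nbr_sum_delta w a b :
  nbr_sum w (fun u => (u == a)%:R - (u == b)%:R) = (e w a)%:R - (e w b)%:R.
Proof.
rewrite /nbr_sum (eq_bigr (fun v => (v == a)%:R * (e w v)%:R - (v == b)%:R * (e w v)%:R)).
  by rewrite sumrB !sum_delta.
by move=> v _; ring.
Qed.

Lemma edge_form_delta a b z :
  edge_form (fun u => (u == a)%:R - (u == b)%:R) z = nbr_sum a z - nbr_sum b z.
Proof.
rewrite edge_formE (eq_bigr (fun u => (u == a)%:R * nbr_sum u z - (u == b)%:R * nbr_sum u z)).
  by rewrite sumrB !sum_delta.
by move=> u _; ring.
Qed.

Lemma sum_supp (x : T -> R) (F : R -> R) : F 0 = 0 ->
  \sum_u F (x u) = \sum_(u in supp x) F (x u).
Proof.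
move=> F0; rewrite [RHS]big_mkcond /=; apply: eq_bigr => u _; rewrite inE.
by case: eqP => // ->.
Qed.

Lemma edge_form_clique_supp (x : T -> R) : is_clique e (supp x) ->
  edge_form x x = (\sum_u x u) ^+ 2 - \sum_u x u ^+ 2.
Proof.
move=> cli; have offdiag u v : (e u v)%:R * x u * x v = x u * x v - (u == v)%:R * (x u * x v).
  case: (eqVneq u v) => [->|uv]; first by rewrite irr_e /=; ring.
  case: (eqVneq (x u) 0) => [->|xu]; first by ring.
  case: (eqVneq (x v) 0) => [->|xv]; first by ring.
  have /forall_inP/(_ u) := cli; rewrite inE => /(_ xu) /forall_inP/(_ v).
  by rewrite inE => /(_ xv); rewrite uv /= => ->; rewrite mul1r mul0r subr0.
rewrite /edge_form (eq_bigr (fun u => x u * \sum_v x v - x u ^+ 2)) => [|u _].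
  by rewrite sumrB -mulr_suml expr2.
rewrite (eq_bigr _ (fun v _ => offdiag u v)) sumrB mulr_sumr; congr (_ - _).
rewrite (eq_bigr (fun v => (v == u)%:R * (x u * x v))) => [|v _]; last by rewrite eq_sym.
by rewrite sum_delta expr2.
Qed.

Lemma motzkin_straus_clique_supp (x : T -> R) : (forall u, 0 <= x u) -> is_clique e (supp x) ->
  edge_form x x * K <= (K - 1) * (\sum_u x u) ^+ 2.
Proof.
move=> x_ge0 cli; rewrite edge_form_clique_supp //.
have := sqr_sum_le (supp x) x.
rewrite -(sum_supp x (F := id)) // -(sum_supp x (F := fun t => t ^+ 2)) ?expr0n //.
have : #|supp x|%:R <= K by rewrite ler_nat card_le_clique_number.
have : 0 <= \sum_u x u ^+ 2 by apply: sumr_ge0 => u _; apply: sqr_ge0.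
nra.
Qed.

(* moving the weight of [b] onto a non-adjacent [a] with at least as large a
   neighbourhood sum does not decrease the form and shrinks the support *)
Lemma motzkin_straus_shift (x : T -> R) a b : (forall u, 0 <= x u) ->
  a \in supp x -> b \in supp x -> a != b -> ~~ e a b -> nbr_sum b x <= nbr_sum a x ->
  exists y : T -> R, [/\ forall u, 0 <= y u, (#|supp y| < #|supp x|)%N,
     \sum_u y u = \sum_u x u & edge_form x x <= edge_form y y].
Proof.
move=> x_ge0 aS bS ab nab le_ba.
pose h u : R := (u == a)%:R - (u == b)%:R.
pose y u := 1 * x u + x b * h u.
have yb : y b = 0 by rewrite /y /h eqxx eq_sym (negbTE ab) /=; ring.
have ya : y a = x a + x b by rewrite /y /h eqxx (negbTE ab) /=; ring.
have yo u : u != a -> u != b -> y u = x u.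
  by move=> ua ub; rewrite /y /h (negbTE ua) (negbTE ub) /=; ring.
exists y; split.
- move=> u; case: (eqVneq u a) => [->|ua]; first by rewrite ya addr_ge0.
  by case: (eqVneq u b) => [->|ub]; rewrite ?yb ?yo.
- apply: (@leq_ltn_trans #|supp x :\ b|); last by rewrite (cardsD1 b (supp x)) bS.
  apply/subset_leq_card/subsetP => u; rewrite !inE.
  case: (eqVneq u b) => [->|ub]; first by rewrite yb eqxx.
  by case: (eqVneq u a) => [->|ua]; [move: aS; rewrite inE | rewrite yo].
- have sum1 (c : T) : \sum_u (u == c)%:R = 1 :> R.
    by rewrite -[RHS](sum_delta c (fun _ => 1)); apply: eq_bigr => u _; rewrite mulr1.
  by rewrite /y /h big_split /= -!mulr_sumr sumrB !sum1 subrr mulr0 addr0 mul1r.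
- have hh : edge_form h h = 0.
    by rewrite /h edge_form_delta !nbr_sum_delta !irr_e (sym_e b a) (negbTE nab) /=; ring.
  have xh : edge_form x h = nbr_sum a x - nbr_sum b x.
    by rewrite edge_formC /h edge_form_delta.
  rewrite /y edge_form_comb hh xh; have := x_ge0 b; nra.
Qed.

Theorem motzkin_straus (x : T -> R) : (forall u, 0 <= x u) ->
  edge_form x x * K <= (K - 1) * (\sum_u x u) ^+ 2.
Proof.
move: {2}#|supp x| (leqnn #|supp x|) => m; elim: m x => [|m IH] x supp_le x_ge0;
  have [|] := boolP (is_clique e (supp x)); try exact: motzkin_straus_clique_supp.
all: move=> /forall_inPn[a aS] /forall_inPn[b bS]; rewrite negb_imply => /andP[ab nab].
  by move: supp_le; rewrite leqn0 => /eqP/cards0_eq supp0; rewrite supp0 inE in aS.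
wlog le_ba : a b aS bS ab nab / nbr_sum b x <= nbr_sum a x.
  move=> shift; case: (lerP (nbr_sum b x) (nbr_sum a x)); first exact: shift.
  by move/ltW; apply: shift; rewrite // 1?eq_sym // sym_e.
have [y [y_ge0 supp_lt sum_yx le_xy]] := motzkin_straus_shift x_ge0 aS bS ab nab le_ba.
rewrite -sum_yx; apply: le_trans (IH _ (leq_trans supp_lt supp_le) y_ge0).
by rewrite ler_wpM2r ?ler0n.
Qed.

End EdgeForm.

Section Wilf.
Variables (R : realFieldType) (T : finType) (e : rel T).
Hypotheses (sym_e : symmetric e) (irr_e : irreflexive e).

Local Notation K := ((clique_number e)%:R : R).
Local Notation N := (#|T|%:R : R).

Lemma edge_form_norm (w : T -> R) :
  `|edge_form e w w| <= edge_form e (fun u => `|w u|) (fun u => `|w u|).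
Proof.
apply: le_trans (ler_norm_sum _ _ _) _; apply: ler_sum => u _.
apply: le_trans (ler_norm_sum _ _ _) _; apply: ler_sum => v _.
by rewrite !normrM normr_nat.
Qed.

Theorem wilf_bound (w : T -> R) :
  `|edge_form e w w| * K <= (K - 1) * N * \sum_u w u ^+ 2.
Proof.
have [T0|/card_gt0P[x _]] := posnP #|T|.
  by rewrite /edge_form !big1 ?normr0 ?mul0r ?mulr0 // => u; have := card0_eq T0 u.
have K_ge1 : 1 <= K by rewrite ler1n (clique_number_gt0 e x).
have sqr_norm : \sum_u `|w u| ^+ 2 = \sum_u w u ^+ 2.
  by apply: eq_bigr => u _; rewrite real_normK ?num_real.
have := sqr_sum_le T (fun u => `|w u|); rewrite sqr_norm.
have := motzkin_straus sym_e irr_e (fun u => normr_ge0 (w u)).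
have := edge_form_norm w; nra.
Qed.

Lemma const_of_wilf_eq (x : T -> R) : (forall u, 0 <= x u) -> 1 < K ->
  edge_form e x x * K = (K - 1) * N * \sum_u x u ^+ 2 -> forall u v, x u = x v.
Proof.
move=> x_ge0 K_gt1 eq_x; apply: sqr_sum_eq_const.
have := motzkin_straus sym_e irr_e x_ge0; rewrite eq_x -mulrA ler_pM2l ?subr_gt0 // => le.
by apply/eqP; rewrite eq_le sqr_sum_le le.
Qed.

Lemma edge_form1_deg :
  edge_form e (fun _ => 1) (fun u => (deg e u)%:R) = \sum_u (deg e u)%:R ^+ 2 :> R.
Proof. by rewrite edge_form1 //; apply: eq_bigr => u _; rewrite expr2. Qed.

Theorem regular_of_sum_deg_sqr (q : R) : K * q = (K - 1) * N ->
  \sum_v (deg e v)%:R ^+ 2 = N * q ^+ 2 -> regular_graph e.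
Proof.
move=> Kq s2E v w; have K_ge1 : 1 <= K by rewrite ler1n (clique_number_gt0 e v).
pose d u := (deg e u)%:R : R; set s2 := \sum_u _ in s2E.
have q_ge0 : 0 <= q.
  by rewrite -(pmulr_rge0 _ (lt_le_trans ltr01 K_ge1)) Kq mulr_ge0 ?subr_ge0.
have [K1|K_gt1] := eqVneq K 1.
  have s20 : s2 = 0 by move: Kq; rewrite K1 subrr mul0r mul1r => q0; rewrite s2E q0; ring.
  have d0 u : deg e u = 0%N.
    move/psumr_eq0P: s20 => /(_ (fun u _ => sqr_ge0 _) u isT) /eqP.
    by rewrite sqrf_eq0 pnatr_eq0 => /eqP.
  by rewrite !d0.
have {K_gt1} K_gt1 : 1 < K by rewrite lt_def K_gt1 K_ge1.
pose p u := q * 1 + 1 * d u; pose m u := q * 1 + (-1) * d u.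
have Bpm : edge_form e p p - edge_form e m m = 4 * q * s2.
  have B1d : edge_form e (fun _ => 1) d = s2 := edge_form1_deg.
  by rewrite !edge_form_comb // B1d; ring.
have Spm : \sum_u p u ^+ 2 + \sum_u m u ^+ 2 = 4 * s2.
  rewrite -big_split /= (eq_bigr (fun u => 2 * q ^+ 2 + 2 * d u ^+ 2)) => [|u _].
    by rewrite big_split /= -!mulr_sumr sumr_const -mulr_natl -/s2 s2E; ring.
  by rewrite /p /m; ring.
have eq_p : edge_form e p p * K = (K - 1) * N * \sum_u p u ^+ 2.
  have := wilf_bound p; have := wilf_bound m.
  have := ler_norm (edge_form e p p); have := ler_norm (- edge_form e m m).
  have : (edge_form e p p - edge_form e m m) * K = (K - 1) * N * (4 * s2).
    by rewrite Bpm -Kq; ring.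
  rewrite -Spm normrN; nra.
have p_ge0 u : 0 <= p u by rewrite /p /d mulr1 mul1r addr_ge0 ?ler0n.
move: (const_of_wilf_eq p_ge0 K_gt1 eq_p v w); rewrite /p /d !mul1r.
by move/addrI/eqP; rewrite eqr_nat => /eqP.
Qed.

End Wilf.

Lemma sum_deg_sqr_quad_mean (R : realType) (T : finType) (e : rel T) :
  \sum_v ((deg e v)%:R ^+ 2 : R) = #|T|%:R * quad_mean_deg R e ^+ 2.
Proof.
rewrite /quad_mean_deg sqr_sqrtr ?divr_ge0 ?ler0n ?sumr_ge0 // => [|v _]; last exact: sqr_ge0.
have [T0|T_gt0] := posnP #|T|; last by rewrite mulrC divfK // pnatr_eq0 -lt0n.
by rewrite T0 mul0r big1 // => v; have := card0_eq T0 v.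
Qed.

Lemma regular_deg_quad_mean (R : realType) (T : finType) (e : rel T) :
  regular_graph e -> forall v, (deg e v)%:R = quad_mean_deg R e.
Proof.
move=> reg v; rewrite /quad_mean_deg; have T_gt0 : (0 < #|T|)%N by apply/card_gt0P; exists v.
have -> : \sum_w (deg e w)%:R ^+ 2 = #|T|%:R * (deg e v)%:R ^+ 2 :> R.
  rewrite (eq_bigr (fun _ => (deg e v)%:R ^+ 2)) => [|w _]; last by rewrite (reg w v).
  by rewrite sumr_const -[_ *+ _]mulr_natl.
by rewrite mulrC mulKf ?pnatr_eq0 -?lt0n // sqrtr_sqr ger0_norm.
Qed.

Theorem corollary4p4 (R : realType) (T : finType) (e : rel T) :
  simple_graph e ->
  ((clique_number e)%:R : R) = (#|T|%:R) / (#|T|%:R - quad_mean_deg R e) ->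
  complete_multipartite e (clique_number e) /\ regular_graph e.
Proof.
case=> sym_e irr_e; set K : R := _%:R; set N : R := #|T|%:R; set q := quad_mean_deg R e.
move=> Kdef; have Kq : K * q = (K - 1) * N.
  have [qN|] := eqVneq (N - q) 0.
    have K0 : K = 0 by rewrite Kdef qN invr0 mulr0.
    have T0 : #|T| = 0%N.
      by apply: eq_card0 => v; have := clique_number_gt0 e v; rewrite -(ltr0n R) -/K K0 ltxx.
    by rewrite K0 /N T0; ring.
  by move=> qN; rewrite mulrBl mul1r -{2}(divfK qN N) -Kdef; ring.
have reg := regular_of_sum_deg_sqr sym_e irr_e Kq (sum_deg_sqr_quad_mean R e).
split=> //; apply: complete_multipartite_of_nonadj_transitive => //.
apply: nonadj_transitive_of_regular => // v; have k_gt0 := clique_number_gt0 e v.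
apply/eqP; rewrite -(eqr_nat R) !natrM (regular_deg_quad_mean R reg v) -subn1 natrB //.
by rewrite mulrC -/K -/q Kq mulrC.
Qed.
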